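(* For integers $n\geq 3$ and $m\geq 2$, the windmill graph $W_n^m$ satisfies $\eta(W_n^m)=n-1$.
   Context: All graphs are finite, simple and undirected. The windmill graph $W_n^m$ consists of $m$ copies of the complete graph $K_n$ sharing a single common vertex; equivalently it is the join of $m$ disjoint copies of $K_{n-1}$ with a single vertex $K_1$. For a vertex $v$, $N(v)$ is its set of neighbours. For a positive integer $k$, $[k]=\{1,\dots,k\}$. For a labeling $f:V(G)\to[k]$ and $S\subseteq V(G)$, $f(S)=\sum_{u\in S}f(u)$. A labeling $f:V(G)\to[k]$ is an additive $k$-coloring if $f(N(u))\neq f(N(v))$ for every edge $(u,v)$ of $G$. The additive chromatic number $\eta(G)$ is the least $k$ for which $G$ has an additive $k$-coloring. *)

From mathcomp Require Import all_boot.
Set Implicit Arguments. Unset Strict Implicit. Unset Printing Implicit Defensive.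

(* A simple graph on a finite vertex type T is given by an adjacency relation
   e : rel T (assumed symmetric and irreflexive where relevant). *)

Definition nbhd (T : finType) (e : rel T) (v : T) : {set T} := [set u | e v u].

Definition fsum (T : finType) (f : T -> nat) (S : {set T}) : nat :=
  \sum_(u in S) f u.

Definition additive_coloring (T : finType) (e : rel T) (k : nat) (f : T -> nat) : Prop :=
  (forall v, 1 <= f v <= k) /\
  (forall u v, e u v -> fsum f (nbhd e u) <> fsum f (nbhd e v)).

Definition is_additive_chromatic_number (T : finType) (e : rel T) (k : nat) : Prop :=
  (exists f, additive_coloring e k f) /\
  (forall k' f, additive_coloring e k' f -> k <= k').

(* Windmill graph W_n^m: vertices are the centre (None) and Some (i, a),
   the a-th non-central vertex of the i-th copy of K_n (i < m, a < n-1). *)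
Definition windmill_vertex (n m : nat) : finType := option ('I_m * 'I_n.-1).

Definition windmill (n m : nat) : rel (windmill_vertex n m) :=
  fun x y =>
    match x, y with
    | None, None => false
    | None, Some _ => true
    | Some _, None => true
    | Some (i, a), Some (j, b) => (i == j) && (a != b)
    end.
Arguments windmill n m : clear implicits.

From mathcomp Require Import all_boot zify.

(* The closed neighbourhood of a blade vertex v of copy i is the centre together
   with all of copy i, so f(N(v)) + f(v) does not depend on v within a copy:
   adjacent blade vertices get distinct neighbourhood sums exactly when they
   get distinct labels.  Hence an additive colouring is injective on the n-1
   blade vertices of a copy, forcing k >= n-1.  Conversely, label the centre 1
   and the a-th blade vertex of every copy a+1: blade labels are distinct, and
   a blade sum is at most s, the sum of one copy's labels, while the centre
   sees m*s >= 2s. *)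

Set Implicit Arguments.
Unset Strict Implicit.
Unset Printing Implicit Defensive.

Lemma big_option (R : Type) (idx : R) (op : Monoid.com_law idx) (T : finType) (F : option T -> R) :
  \big[op/idx]_(u : option T) F u = op (F None) (\big[op/idx]_(x : T) F (Some x)).
Proof.
rewrite (bigD1 None) //= (reindex_omap Some id) //=; last by case.
by under eq_bigl do rewrite eqxx.
Qed.

Lemma big_pair (R : Type) (idx : R) (op : Monoid.com_law idx) (I J : finType) (F : I * J -> R) :
  \big[op/idx]_(p : I * J) F p = \big[op/idx]_(i : I) \big[op/idx]_(j : J) F (i, j).
Proof. by rewrite pair_bigA; apply: eq_bigr => -[]. Qed.

Section WindmillNeighbourhoodSums.

Variables (n m : nat) (f : windmill_vertex n m -> nat).

Lemma fsum_windmill_nbhd_center :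
  fsum f (nbhd (windmill n m) None) = \sum_(i < m) \sum_(a < n.-1) f (Some (i, a)).
Proof.
rewrite /fsum big_mkcond big_option big_pair inE /= add0n.
by apply: eq_bigr => i _; apply: eq_bigr => a _; rewrite inE.
Qed.

Lemma fsum_windmill_nbhd_blade (i : 'I_m) (a : 'I_n.-1) :
  fsum f (nbhd (windmill n m) (Some (i, a))) =
  f None + \sum_(b < n.-1 | b != a) f (Some (i, b)).
Proof.
rewrite /fsum big_mkcond big_option big_pair inE /=; congr (_ + _).
rewrite (bigD1 i) //= [X in _ + X]big1 ?addn0; last first.
  by move=> j /negbTE ji; apply: big1 => b _; rewrite inE /= eq_sym ji.
by rewrite [RHS]big_mkcond; apply: eq_bigr => b _; rewrite inE /= eqxx eq_sym.
Qed.

Lemma fsum_windmill_nbhd_blade_add (i : 'I_m) (a : 'I_n.-1) :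
  fsum f (nbhd (windmill n m) (Some (i, a))) + f (Some (i, a)) =
  f None + \sum_(b < n.-1) f (Some (i, b)).
Proof.
by rewrite fsum_windmill_nbhd_blade -addnA [in RHS](bigD1 a) //= (addnC (f (Some _))).
Qed.

Lemma eq_fsum_windmill_blade (i : 'I_m) (a b : 'I_n.-1) :
  (fsum f (nbhd (windmill n m) (Some (i, a))) == fsum f (nbhd (windmill n m) (Some (i, b))))
  = (f (Some (i, a)) == f (Some (i, b))).
Proof.
have := fsum_windmill_nbhd_blade_add i a; have := fsum_windmill_nbhd_blade_add i b.
by move=> Ea Eb; apply/eqP/eqP => E; lia.
Qed.

End WindmillNeighbourhoodSums.

Lemma injective_bounded_leq (p k : nat) (g : 'I_p -> nat) :
  injective g -> (forall i, 1 <= g i <= k) -> p <= k.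
Proof.
move=> g_inj g_range; rewrite -[p]size_enum_ord -(size_map g) -(size_iota 1 k).
apply: uniq_leq_size; first by rewrite map_inj_uniq ?enum_uniq.
by move=> _ /mapP [i _ ->]; rewrite mem_iota add1n ltnS.
Qed.

Lemma additive_coloring_windmill_ge (n m k : nat) (f : windmill_vertex n m -> nat) :
  0 < m -> additive_coloring (windmill n m) k f -> n.-1 <= k.
Proof.
move=> m_gt0 [f_range f_add]; pose i0 := Ordinal m_gt0.
apply: (@injective_bounded_leq _ _ (fun a => f (Some (i0, a)))) => [a b fab|a]; last exact: f_range.
case: (eqVneq a b) => // ab; exfalso.
apply: (f_add (Some (i0, a)) (Some (i0, b))); first exact: ab.
by apply/eqP; rewrite eq_fsum_windmill_blade fab.
Qed.

Section WindmillLabel.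

Variables n m : nat.

Definition windmill_label (v : windmill_vertex n m) : nat :=
  if v is Some (_, a) then a.+1 else 1.

Lemma fsum_windmill_label_blade_lt_center (i : 'I_m) (a : 'I_n.-1) :
  1 < m -> fsum windmill_label (nbhd (windmill n m) (Some (i, a))) <
           fsum windmill_label (nbhd (windmill n m) None).
Proof.
move=> m_gt1; rewrite fsum_windmill_nbhd_center /= sum_nat_const card_ord.
have /= := fsum_windmill_nbhd_blade windmill_label i a.
have /= := fsum_windmill_nbhd_blade_add windmill_label i a.
nia.
Qed.

Lemma windmill_label_additive :
  1 < n -> 1 < m -> additive_coloring (windmill n m) n.-1 windmill_label.
Proof.
move=> n_gt1 m_gt1; split=> [[[i a]|] /=|]; [exact: ltn_ord | lia |].
move=> [[i a]|] [[j b]|] //= edge; apply/eqP.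
- case/andP: edge => /eqP <- ab.
  by rewrite eq_fsum_windmill_blade /= eqSS.
- by rewrite ltn_eqF ?fsum_windmill_label_blade_lt_center.
- by rewrite gtn_eqF ?fsum_windmill_label_blade_lt_center.
Qed.

End WindmillLabel.

Theorem mainTheorem7 (n m : nat) :
  3 <= n -> 2 <= m -> is_additive_chromatic_number (windmill n m) n.-1.
Proof.
move=> n_ge3 m_ge2; split.
  by exists (@windmill_label n m); apply: windmill_label_additive; lia.
by move=> k f; apply: additive_coloring_windmill_ge; lia.
Qed.
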